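(* Let $J\subseteq S$ and let $u,v\in\mathfrak{S}_n^J$ with $u\lessdot_S v$ (a cover relation in weak order). The following are equivalent: (i) there are indices $i<j<k$, each in different $J$-regions, such that $v_k<v_i<v_j$, $v_i=v_k+1$, and $\mathrm{inv}(v)\setminus\mathrm{inv}(u)=\{(i,k)\}$; (ii) $\Pi_\downarrow^J(u)=\Pi_\downarrow^J(v)$; (iii) $\Pi_\uparrow^J(u)=\Pi_\uparrow^J(v)$.
   Context: $\mathfrak{S}_n$ is the symmetric group on $[n]$, $s_i=(i,i+1)$, $S=\{s_1,\dots,s_{n-1}\}$, one-line notation $w=w_1\cdots w_n$, $\mathrm{inv}(w)=\{(i,j):i<j,\ w_i>w_j\}$, weak order $u\le_S v\iff\mathrm{inv}(u)\subseteq\mathrm{inv}(v)$; $u\lessdot_S v$ means $\mathrm{inv}(v)\setminus\mathrm{inv}(u)=\{(i,j)\}$ for a single pair with $v_i=v_j+1$ and $\mathrm{inv}(u)\subseteq\mathrm{inv}(v)$. For $J\subseteq S$, $\mathfrak{S}_n^J$ is the set of $w$ with $w_i<w_{i+1}$ whenever $s_i\in J$. Writing $J=S\setminus\{s_{j_1},\dots,s_{j_r}\}$ with $j_1<\dots<j_r$, the $J$-regions are $\{1,\dots,j_1\},\{j_1+1,\dots,j_2\},\dots,\{j_r+1,\dots,n\}$. $w\in\mathfrak{S}_n^J$ is $(J,231)$-avoiding if there are no indices $i<j<k$ in pairwise different $J$-regions with $w_k<w_i<w_j$ and $w_i=w_k+1$, and $(J,132)$-avoiding if there are no indices $i<j<k$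 in pairwise different $J$-regions with $w_i<w_k<w_j$ and $w_k=w_i+1$. For $w\in\mathfrak{S}_n^J$, $\Pi_\downarrow^J(w)$ is the unique greatest $(J,231)$-avoiding element of $\mathfrak{S}_n^J$ that is $\le_S w$, and $\Pi_\uparrow^J(w)$ is the unique least $(J,132)$-avoiding element of $\mathfrak{S}_n^J$ that is $\ge_S w$ (both exist). *)

(* Permutations of [n] are 'S_n = {perm 'I_n}; positions and
   values are 0-indexed (position p : 'I_n stands for p+1, value w p for w_(p+1)).
   J ⊆ S is a set J : {set 'I_n.-1}, where j : 'I_n.-1 stands for s_(j+1),
   which swaps 0-indexed positions j and j+1. *)
From mathcomp Require Import ssreflect ssrfun ssrbool eqtype ssrnat seq choice fintype finset fingroup perm.
Set Implicit Arguments. Unset Strict Implicit. Unset Printing Implicit Defensive.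

Section Defs.
Variable n : nat.
Implicit Types (u v w : 'S_n) (J : {set 'I_n.-1}).

Definition inversions w : {set 'I_n * 'I_n} :=
  [set p : 'I_n * 'I_n | (val p.1 < val p.2) && (val (w p.2) < val (w p.1))].

Definition weakle u v : bool := inversions u \subset inversions v.

Definition weakcover u v : bool :=
  weakle u v &&
  [exists i : 'I_n, exists j : 'I_n,
     (inversions v :\: inversions u == [set (i, j)]) && (val (v i) == (val (v j)).+1)].

Definition parab J w : bool :=
  [forall j : 'I_n.-1, forall a : 'I_n, forall b : 'I_n,
     [&& j \in J, val a == val j & val b == (val j).+1] ==> (val (w a) < val (w b))%N].

(* index of the J-region containing position p: number of cut points
   s_(j+1) \notin J with j < p (cut between 0-indexed positions j and j+1) *)
Definition region J (p : 'I_n) : nat :=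
  #|[set j : 'I_n.-1 | (j \notin J) && (val j < val p)%N]|.

Definition diff_regions J (i j k : 'I_n) : bool :=
  [&& region J i != region J j, region J j != region J k & region J i != region J k].

Definition avoid231 J w : bool :=
  ~~ [exists i : 'I_n, exists j : 'I_n, exists k : 'I_n,
       [&& (val i < val j)%N, (val j < val k)%N, diff_regions J i j k,
           (val (w k) < val (w i))%N, (val (w i) < val (w j))%N &
           val (w i) == (val (w k)).+1]].

Definition avoid132 J w : bool :=
  ~~ [exists i : 'I_n, exists j : 'I_n, exists k : 'I_n,
       [&& (val i < val j)%N, (val j < val k)%N, diff_regions J i j k,
           (val (w i) < val (w k))%N, (val (w k) < val (w j))%N &
           val (w k) == (val (w i)).+1]].

Definition is_Pidown J w p : bool :=
  [&& parab J p, avoid231 J p, weakle p w &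
      [forall q : 'S_n, (parab J q && avoid231 J q && weakle q w) ==> weakle q p]].

Definition is_Piup J w p : bool :=
  [&& parab J p, avoid132 J p, weakle w p &
      [forall q : 'S_n, (parab J q && avoid132 J q && weakle w q) ==> weakle p q]].

(* the projections (they exist for w in S_n^J; the default w is never used then) *)
Definition Pidown J w : 'S_n := odflt w [pick p | is_Pidown J w p].
Definition Piup J w : 'S_n := odflt w [pick p | is_Piup J w p].

End Defs.

From mathcomp Require Import ssreflect ssrfun ssrbool eqtype ssrnat seq choice fintype finset fingroup perm.
From mathcomp Require Import zify.
Set Implicit Arguments. Unset Strict Implicit. Unset Printing Implicit Defensive.

(* Write u = v (i k) for the cover.  If w has a (J,231) occurrence x < j < y with
   w_x = w_y + 1, swapping the values at x and y moves w one step down without changing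
   the (J,231)-avoiding permutations below it: an avoiding r <= w with (x,y) an inversion
   would, by a discrete intermediate value argument on the values from r_y to r_x, contain
   a (J,231) occurrence itself.  Dually for (J,132) and upper bounds.  So an occurrence
   (i,j,k) in v gives both equalities.  If there is none, every j between i and k in
   another region has v_j < v_k; such inversions survive all these swaps, so (i,k) is an
   inversion of Pidown v but not of Pidown u <= u, and symmetrically it is an inversion of
   Piup v >= v but not of Piup u. *)

Section Projections.
Variables (n : nat) (J : {set 'I_n.-1}).
Implicit Types (r v w : 'S_n) (a b c d i j k x y z : 'I_n).

Lemma val_perm_inj w a b : val (w a) = val (w b) -> a = b.
Proof. by move/val_inj/perm_inj. Qed.

Lemma mem_inversions w a b :
  ((a, b) \in inversions w) = (val a < val b) && (val (w b) < val (w a)).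
Proof. by rewrite inE. Qed.

Lemma inversions_lt w a b : (a, b) \in inversions w -> val a < val b.
Proof. by rewrite mem_inversions => /andP[]. Qed.

Lemma card_ord_lt m : m <= n -> #|[set z : 'I_n | val z < m]| = m.
Proof.
move=> le_m_n; have widen_inj : injective (widen_ord le_m_n).
  by move=> a b [] /val_inj.
rewrite -[RHS]card_ord -(card_imset _ widen_inj).
apply: eq_card => z; rewrite !inE; apply/idP/imsetP => [lt_z_m | [y _ ->]]; last exact: ltn_ord y.
by exists (Ordinal lt_z_m) => //; apply: val_inj.
Qed.

Lemma val_perm_card w x :
  val (w x) = #|[set y | ((val y < val x) && ((y, x) \notin inversions w)) ||
                         ((val x < val y) && ((x, y) \in inversions w))]|.
Proof.
rewrite -[LHS](@card_ord_lt (val (w x))); last exact: ltnW (ltn_ord (w x)).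
rewrite -(card_preimset _ (@perm_inj _ w)).
apply: eq_card => y; rewrite !inE /=.
case: (ltngtP (val y) (val x)) => [yx | xy | /val_inj ->]; rewrite ?ltnn //=.
rewrite orbF -leqNgt ltn_neqAle; case: eqP => //= /val_perm_inj eq_yx.
by rewrite eq_yx ltnn in yx.
Qed.

Lemma inversions_inj : injective (@inversions n).
Proof. by move=> r w eq_rw; apply/permP => x; apply: val_inj; rewrite !val_perm_card eq_rw. Qed.

Lemma weakle_anti r w : weakle r w -> weakle w r -> r = w.
Proof. by move=> rw wr; apply: inversions_inj; by apply/eqP; rewrite eqEsubset; apply/andP. Qed.

Lemma weakle_inv r w a b :
  weakle r w -> val a < val b -> val (r b) < val (r a) -> val (w b) < val (w a).
Proof.
by move=> /subsetP rw ab rba; have := rw (a, b); rewrite !mem_inversions ab rba => /(_ isT).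
Qed.

Lemma weakle_noninv r w a b :
  weakle r w -> val a < val b -> val (w a) < val (w b) -> val (r a) < val (r b).
Proof.
move=> rw ab wab; case: ltngtP => // [rba | /val_perm_inj eq_ab].
  by have := weakle_inv rw ab rba; rewrite ltnNge ltnW.
by rewrite eq_ab ltnn in ab.
Qed.

Definition swap w a b : 'S_n := (tperm a b * w)%g.

Lemma swapL w a b : swap w a b a = w b.
Proof. by rewrite permM tpermL. Qed.

Lemma swapR w a b : swap w a b b = w a.
Proof. by rewrite permM tpermR. Qed.

Lemma swapD w a b x : x != a -> x != b -> swap w a b x = w x.
Proof. by move=> xa xb; rewrite permM tpermD // eq_sym. Qed.

Lemma swapK w a b : swap (swap w a b) a b = w.
Proof. by apply/permP => x; rewrite !permM tpermK. Qed.

Lemma swap_lt w a b x y :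
  val (w a) = (val (w b)).+1 \/ val (w b) = (val (w a)).+1 ->
  (x, y) != (a, b) -> (y, x) != (a, b) ->
  (val (swap w a b x) < val (swap w a b y)) = (val (w x) < val (w y)).
Proof.
move=> adj; rewrite !xpair_eqE !permM.
have val_neq c d : c != d -> (w c : nat) != w d.
  by apply: contra => /eqP /val_perm_inj ->.
case: tpermP => [-> | -> | xa xb]; case: tpermP => [-> | -> | ya yb];
  rewrite ?eqxx //= ?andbT ?andbF //; try by move=> *; rewrite !ltnn.
all: move=> _ _; match goal with
  | H1 : ?t <> ?c, H2 : ?t <> ?d |- _ =>
      have := val_neq _ _ (introN eqP H1); have := val_neq _ _ (introN eqP H2)
  end; move: adj => /=; lia.
Qed.

Lemma inversions_swap_down w a b : val a < val b -> val (w a) = (val (w b)).+1 ->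
  inversions (swap w a b) = inversions w :\ (a, b).
Proof.
move=> ab adj; apply/setP => -[x y]; rewrite in_setD1 !mem_inversions.
have ba : (val b < val a) = false by rewrite ltnNge ltnW.
have [[-> ->] | neq_ab] := eqVneq (x, y) (a, b).
  by rewrite swapL swapR adj [_.+1 < _]ltnNge leqnSn andbF.
have [[-> ->] | neq_ba] := eqVneq (y, x) (a, b); first by rewrite ba.
by rewrite swap_lt //; left.
Qed.

Lemma inversions_swap_up w a b : val a < val b -> val (w b) = (val (w a)).+1 ->
  inversions (swap w a b) = (a, b) |: inversions w.
Proof.
move=> ab adj; have ab_swap : (a, b) \in inversions (swap w a b).
  by rewrite mem_inversions ab swapL swapR adj ltnSn.
have := @inversions_swap_down (swap w a b) a b ab.
by rewrite swapK swapL swapR => /(_ adj) ->; rewrite setD1K.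
Qed.

Lemma region_mono x y : val x <= val y -> region J x <= region J y.
Proof.
move=> xy; apply: subset_leq_card; apply/subsetP => j; rewrite !inE => /andP[-> jx].
exact: leq_trans jx xy.
Qed.

Lemma region_step (j : 'I_n.-1) a b :
  j \in J -> val a = val j -> val b = (val j).+1 -> region J a = region J b.
Proof.
move=> jJ aj bj; apply: eq_card => i; rewrite !inE aj bj ltnS [in RHS]leq_eqVlt.
by case: (eqVneq i j) => [-> | ij]; rewrite ?jJ //= val_eqE (negbTE ij).
Qed.

Lemma diff_regions_widen x x' j y y' :
  val x' <= val x -> val y <= val y' -> val x <= val j <= val y ->
  diff_regions J x j y -> diff_regions J x' j y'.
Proof.
move=> x'x yy' /andP[xj jy] /and3P[dxj djy _].
have := region_mono x'x; have := region_mono xj; have := region_mono jy.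
have := region_mono yy'; move: dxj djy; rewrite /diff_regions; lia.
Qed.

Lemma parab_swap w a b : parab J w ->
  val (w a) = (val (w b)).+1 \/ val (w b) = (val (w a)).+1 ->
  region J a != region J b -> parab J (swap w a b).
Proof.
move=> pw adj rab; apply/forallP => j; apply/forallP => c; apply/forallP => d.
apply/implyP => /and3P[jJ /eqP cj /eqP dj]; have rcd := region_step jJ cj dj.
rewrite swap_lt //.
- by move/forallP/(_ j)/forallP/(_ c)/forallP/(_ d)/implyP: pw; apply; rewrite jJ cj dj !eqxx.
- by apply: contraNneq rab => -[<- <-]; rewrite rcd.
- by apply: contraNneq rab => -[<- <-]; rewrite rcd.
Qed.

Definition pat231 w i j k : bool :=
  [&& val i < val j, val j < val k, diff_regions J i j k,
      val (w k) < val (w i), val (w i) < val (w j) & val (w i) == (val (w k)).+1].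

Definition pat132 w i j k : bool :=
  [&& val i < val j, val j < val k, diff_regions J i j k,
      val (w i) < val (w k), val (w k) < val (w j) & val (w k) == (val (w i)).+1].

Lemma pat231P w i j k :
  reflect [/\ val i < val j < val k, diff_regions J i j k,
              val (w k) < val (w i) < val (w j) & val (w i) = (val (w k)).+1]
          (pat231 w i j k).
Proof.
apply: (iffP and5P) => [[ij jk dr ki /andP[ij' /eqP adj]] | [/andP[ij jk] dr /andP[ki ij'] adj]].
  by split; rewrite ?ij ?ki.
by split => //; rewrite ij' adj eqxx.
Qed.

Lemma pat132P w i j k :
  reflect [/\ val i < val j < val k, diff_regions J i j k,
              val (w i) < val (w k) < val (w j) & val (w k) = (val (w i)).+1]
          (pat132 w i j k).
Proof.
apply: (iffP and5P) => [[ij jk dr ik /andP[kj /eqP adj]] | [/andP[ij jk] dr /andP[ik kj] adj]].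
  by split; rewrite ?ij ?ik.
by split => //; rewrite kj adj eqxx.
Qed.

Lemma avoid231_pat w i j k : avoid231 J w -> ~~ pat231 w i j k.
Proof. by move=> /existsPn/(_ i)/existsPn/(_ j)/existsPn/(_ k). Qed.

Lemma avoid132_pat w i j k : avoid132 J w -> ~~ pat132 w i j k.
Proof. by move=> /existsPn/(_ i)/existsPn/(_ j)/existsPn/(_ k). Qed.

Lemma value_crossing w (A : pred 'I_n) a b :
  val (w a) <= val (w b) -> A a -> ~~ A b ->
  exists c d, [/\ A c, ~~ A d, val (w a) <= val (w c),
                  val (w d) = (val (w c)).+1 & val (w d) <= val (w b)].
Proof.
move=> + Aa nAb; move Em: (val (w b) - val (w a)) => m.
elim: m a Em Aa => [|m IH] a Em Aa ab.
  have eq_ab : a = b by apply: (@val_perm_inj w); lia.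
  by move: nAb; rewrite -eq_ab Aa.
have lt_n : (val (w a)).+1 < n by have := ltn_ord (w b); rewrite /= in Em ab *; lia.
pose d := (w^-1)%g (Ordinal lt_n); have wd : val (w d) = (val (w a)).+1 by rewrite permKV.
case Ad : (A d); last by exists a, d; split; rewrite ?Ad //; lia.
have Em' : val (w b) - val (w d) = m by lia.
have [|c [d' [Ac nAd' dc d'c d'b]]] := IH d Em' Ad; first by lia.
by exists c, d'; split => //; lia.
Qed.

Lemma avoid231_gap r x j y : avoid231 J r ->
  val x < val j -> val j < val y -> diff_regions J x j y ->
  val (r y) < val (r x) -> val (r x) < val (r j) ->
  exists2 z, val x < val z < val y & val (r y) < val (r z) < val (r x).
Proof.
move=> ar xj jy dr ryx rxj.
(* Either d lies strictly between x and y, or (d, j, c) is a (J,231) occurrence. *)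
have nyx : ~~ (val y <= val x) by rewrite -ltnNge (ltn_trans xj jy).
have [c [d [yc dy rc rdc rdx]]] :=
  value_crossing (A := fun z => val y <= val z) (ltnW ryx) (leqnn _) nyx.
have {yc dy} [yc dy] : val y <= val c /\ val d < val y by split; last rewrite ltnNge.
case: (ltnP (val x) (val d)) => [xd | dx].
  exists d; first by rewrite xd.
  have neq_dx : val (r d) != val (r x) by apply: contraTneq xd => /val_perm_inj ->; rewrite ltnn.
  by apply/andP; split; lia.
case/negP: (avoid231_pat d j c ar); apply/pat231P; split; try lia.
by apply: (diff_regions_widen dx yc _ dr); rewrite (ltnW xj) (ltnW jy).
Qed.

Lemma avoid132_gap r x j y : avoid132 J r ->
  val x < val j -> val j < val y -> diff_regions J x j y ->
  val (r x) < val (r y) -> val (r y) < val (r j) ->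
  exists2 z, val x < val z < val y & val (r x) < val (r z) < val (r y).
Proof.
move=> ar xj jy dr rxy ryj.
have nyx : ~~ (val y <= val x) by rewrite -ltnNge (ltn_trans xj jy).
have [c [d [cx xd rc rdc rdy]]] :=
  value_crossing (A := fun z => val z <= val x) (ltnW rxy) (leqnn _) nyx.
have {cx xd} [cx xd] : val c <= val x /\ val x < val d by split; last rewrite ltnNge.
case: (ltnP (val d) (val y)) => [dy | yd].
  exists d; first by rewrite xd.
  have neq_dy : val (r d) != val (r y) by apply: contraTneq dy => /val_perm_inj ->; rewrite ltnn.
  by apply/andP; split; lia.
case/negP: (avoid132_pat c j d ar); apply/pat132P; split; try lia.
by apply: (diff_regions_widen cx yd _ dr); rewrite (ltnW xj) (ltnW jy).
Qed.

Lemma avoid231_below_pat r w x j y :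
  pat231 w x j y -> avoid231 J r -> weakle r w -> (x, y) \notin inversions r.
Proof.
case/pat231P => /andP[xj jy] dr /andP[wyx wxj] adj ar rw.
apply/negP; rewrite mem_inversions => /andP[_ ryx].
have [z /andP[xz zy] /andP[ryz rzx]] :=
  avoid231_gap ar xj jy dr ryx (weakle_noninv rw xj wxj).
have := weakle_inv rw xz rzx; have := weakle_inv rw zy ryz; lia.
Qed.

Lemma avoid132_above_pat r w x j y :
  pat132 w x j y -> avoid132 J r -> weakle w r -> (x, y) \in inversions r.
Proof.
case/pat132P => /andP[xj jy] dr /andP[wxy wyj] adj ar wr.
rewrite mem_inversions (ltn_trans xj jy) /=; case: ltngtP => // [rxy | /val_perm_inj eq_xy].
  have [z /andP[xz zy] /andP[rxz rzy]] :=
    avoid132_gap ar xj jy dr rxy (weakle_inv wr jy wyj).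
  have := weakle_noninv wr xz rxz; have := weakle_noninv wr zy rzy; lia.
by move: (ltn_trans xj jy); rewrite eq_xy ltnn.
Qed.

Lemma inversions_swap231 w x j y :
  pat231 w x j y -> inversions (swap w x y) = inversions w :\ (x, y).
Proof. by case/pat231P => /andP[xj jy] _ _ adj; apply: inversions_swap_down (ltn_trans xj jy) adj. Qed.

Lemma inversions_swap132 w x j y :
  pat132 w x j y -> inversions (swap w x y) = (x, y) |: inversions w.
Proof. by case/pat132P => /andP[xj jy] _ _ adj; apply: inversions_swap_up (ltn_trans xj jy) adj. Qed.

Lemma weakle_swap231 r w x j y :
  avoid231 J r -> pat231 w x j y -> weakle r (swap w x y) = weakle r w.
Proof.
move=> ar pat; rewrite /weakle (inversions_swap231 pat) subsetD1.
by case rw: (inversions r \subset inversions w); rewrite //= (avoid231_below_pat pat ar rw).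
Qed.

Lemma weakle_swap132 r w x j y :
  avoid132 J r -> pat132 w x j y -> weakle (swap w x y) r = weakle w r.
Proof.
move=> ar pat; rewrite /weakle (inversions_swap132 pat) subUset sub1set.
by case wr: (inversions w \subset inversions r); rewrite ?andbF // (avoid132_above_pat pat ar wr).
Qed.

Lemma is_Pidown_swap w x j y : pat231 w x j y -> is_Pidown J (swap w x y) =1 is_Pidown J w.
Proof.
move=> pat p; rewrite /is_Pidown.
have weakle_swap q : avoid231 J q && weakle q (swap w x y) = avoid231 J q && weakle q w.
  by case aq: (avoid231 J q); rewrite //= (weakle_swap231 aq pat).
under eq_forallb => q do rewrite -andbA weakle_swap andbA.
by rewrite [avoid231 J p && _]andbA weakle_swap -andbA.
Qed.

Lemma is_Piup_swap w x j y : pat132 w x j y -> is_Piup J (swap w x y) =1 is_Piup J w.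
Proof.
move=> pat p; rewrite /is_Piup.
have weakle_swap q : avoid132 J q && weakle (swap w x y) q = avoid132 J q && weakle w q.
  by case aq: (avoid132 J q); rewrite //= (weakle_swap132 aq pat).
under eq_forallb => q do rewrite -andbA weakle_swap andbA.
by rewrite [avoid132 J p && _]andbA weakle_swap -andbA.
Qed.

Definition down_stable w i k : Prop :=
  (i, k) \in inversions w /\
  forall j, val i < val j -> val j < val k -> diff_regions J i j k -> val (w j) < val (w k).

Definition up_stable w i k : Prop :=
  (i, k) \notin inversions w /\
  forall j, val i < val j -> val j < val k -> diff_regions J i j k -> val (w j) < val (w i).

Lemma down_stable_swap w x j y i k :
  pat231 w x j y -> down_stable w i k -> down_stable (swap w x y) i k.
Proof.
move=> pat [ik_w stable]; have /pat231P[/andP[xj jy] dr /andP[wyx wxj] adj] := pat.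
have neq_xy : (i, k) != (x, y).
  by apply/eqP => -[ei ek]; subst i k; have := stable j xj jy dr; lia.
split=> [|j' ij' j'k dr']; first by rewrite (inversions_swap231 pat) in_setD1 neq_xy.
rewrite swap_lt; [exact: stable | by left | apply/eqP => -[ej ek] | apply/eqP => -[ek ej]];
  subst j' k; last by lia.
by have := stable x ij' j'k dr'; lia.
Qed.

Lemma up_stable_swap w x j y i k :
  pat132 w x j y -> up_stable w i k -> up_stable (swap w x y) i k.
Proof.
move=> pat [ik_w stable]; have /pat132P[/andP[xj jy] dr /andP[wxy wyj] adj] := pat.
have neq_xy : (i, k) != (x, y).
  by apply/eqP => -[ei ek]; subst i k; have := stable j xj jy dr; lia.
split=> [|j' ij' j'k dr']; first by rewrite (inversions_swap132 pat) in_setU1 negb_or neq_xy.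
rewrite swap_lt; [exact: stable | by right | apply/eqP => -[ej ei] | apply/eqP => -[ei ej]];
  subst j' i; first by lia.
by have := stable y ij' j'k dr'; lia.
Qed.

Lemma Pidown_exists w : parab J w ->
  exists2 p, is_Pidown J w p & forall i k, down_stable w i k -> (i, k) \in inversions p.
Proof.
have [m] := ubnP #|inversions w|; elim: m w => // m IH w lt_w_m pw.
case: (boolP (avoid231 J w)) => [aw | /negbNE/existsP[x /existsP[j /existsP[y pat]]]].
  exists w => [|i k []//]; apply/and4P; split => //; first exact: subxx.
  by apply/forallP => q; apply/implyP => /andP[_].
have /pat231P[/andP[xj jy] /and3P[_ _ dxy] /andP[wyx _] adj] := pat.
have [||p pd stable_p] := IH (swap w x y).
- have xy_w : (x, y) \in inversions w by rewrite mem_inversions (ltn_trans xj jy).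
  by rewrite (inversions_swap231 pat); apply: leq_trans (proper_card (properD1 xy_w)) lt_w_m.
- by apply: parab_swap => //; left.
exists p; first by rewrite -(is_Pidown_swap pat).
by move=> i k /(down_stable_swap pat); apply: stable_p.
Qed.

Lemma Piup_exists w : parab J w ->
  exists2 p, is_Piup J w p & forall i k, up_stable w i k -> (i, k) \notin inversions p.
Proof.
have [m] := ubnP #|~: inversions w|; elim: m w => // m IH w lt_w_m pw.
case: (boolP (avoid132 J w)) => [aw | /negbNE/existsP[x /existsP[j /existsP[y pat]]]].
  exists w => [|i k []//]; apply/and4P; split => //; first exact: subxx.
  by apply/forallP => q; apply/implyP => /andP[_].
have /pat132P[/andP[xj jy] /and3P[_ _ dxy] /andP[wxy _] adj] := pat.
have [||p pu stable_p] := IH (swap w x y).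
- have xy_w : ~~ ([set (x, y)] \subset inversions w).
    by rewrite sub1set mem_inversions; apply/nandP; right; rewrite -leqNgt ltnW.
  rewrite (inversions_swap132 pat).
  by apply: leq_trans (proper_card _) lt_w_m; rewrite properC properUr.
- by apply: parab_swap => //; right.
exists p; first by rewrite -(is_Piup_swap pat).
by move=> i k /(up_stable_swap pat); apply: stable_p.
Qed.

Lemma Pidown_eq w p : is_Pidown J w p -> Pidown J w = p.
Proof.
move=> pd; rewrite /Pidown; case: pickP => [p' pd' | /(_ p)]; last by rewrite pd.
case/and4P: pd => pp ap pw max; case/and4P: pd' => pp' ap' p'w max'.
apply: weakle_anti.
  by move/forallP/(_ p')/implyP: max; apply; rewrite pp' ap'.
by move/forallP/(_ p)/implyP: max'; apply; rewrite pp ap.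
Qed.

Lemma Piup_eq w p : is_Piup J w p -> Piup J w = p.
Proof.
move=> pu; rewrite /Piup; case: pickP => [p' pu' | /(_ p)]; last by rewrite pu.
case/and4P: pu => pp ap wp min; case/and4P: pu' => pp' ap' wp' min'.
apply: weakle_anti.
  by move/forallP/(_ p)/implyP: min'; apply; rewrite pp ap.
by move/forallP/(_ p')/implyP: min; apply; rewrite pp' ap'.
Qed.

Lemma Pidown_swap w x j y : parab J w -> pat231 w x j y -> Pidown J (swap w x y) = Pidown J w.
Proof.
move=> pw pat; have [p pd _] := Pidown_exists pw.
by rewrite (Pidown_eq pd) (@Pidown_eq _ p) // (is_Pidown_swap pat).
Qed.

Lemma Piup_swap w x j y : parab J w -> pat132 w x j y -> Piup J (swap w x y) = Piup J w.
Proof.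
move=> pw pat; have [p pu _] := Piup_exists pw.
by rewrite (Piup_eq pu) (@Piup_eq _ p) // (is_Piup_swap pat).
Qed.

Lemma weakle_Pidown w : parab J w -> weakle (Pidown J w) w.
Proof. by move=> pw; have [p pd _] := Pidown_exists pw; rewrite (Pidown_eq pd); case/and4P: pd. Qed.

Lemma weakle_Piup w : parab J w -> weakle w (Piup J w).
Proof. by move=> pw; have [p pu _] := Piup_exists pw; rewrite (Piup_eq pu); case/and4P: pu. Qed.

Lemma down_stable_Pidown w i k :
  parab J w -> down_stable w i k -> (i, k) \in inversions (Pidown J w).
Proof. by move=> pw st; have [p pd stable_p] := Pidown_exists pw; rewrite (Pidown_eq pd) stable_p. Qed.

Lemma up_stable_Piup w i k :
  parab J w -> up_stable w i k -> (i, k) \notin inversions (Piup J w).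
Proof. by move=> pw st; have [p pu stable_p] := Piup_exists pw; rewrite (Piup_eq pu) stable_p. Qed.

Lemma pat132_swap231 w x j y : pat231 w x j y -> pat132 (swap w x y) x j y.
Proof.
case/pat231P=> /andP[xj jy] dr /andP[wyx wxj] adj; apply/pat132P.
have [jx jy'] : j != x /\ j != y by split; apply/eqP => ej; subst j; rewrite ltnn in xj jy.
by rewrite swapL swapR swapD // xj jy wyx wxj.
Qed.

Lemma no_pat231_lt v i k : val (v i) = (val (v k)).+1 -> ~~ [exists j, pat231 v i j k] ->
  forall j, val i < val j -> val j < val k -> diff_regions J i j k -> val (v j) < val (v k).
Proof.
move=> adj no_pat j ij jk dr; case: ltngtP => // [kj | /val_perm_inj ejk]; last first.
  by rewrite ejk ltnn in jk.
have neq_ji : val (v j) != val (v i) by apply: contraTneq ij => /val_perm_inj ->; rewrite ltnn.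
by case/negP: no_pat; apply/existsP; exists j; apply/pat231P; split; rewrite ?ij ?jk //; lia.
Qed.

Lemma Pidown_swap_eq v i k : parab J v -> parab J (swap v i k) ->
  (i, k) \in inversions v -> val (v i) = (val (v k)).+1 ->
  (Pidown J (swap v i k) == Pidown J v) = [exists j, pat231 v i j k].
Proof.
move=> pv pu ik_v adj; case: (boolP [exists j, pat231 v i j k]) => [/existsP[j pat] | no_pat].
  by rewrite (Pidown_swap pv pat) eqxx.
have ik := inversions_lt ik_v.
have ik_Pv : (i, k) \in inversions (Pidown J v).
  by apply: down_stable_Pidown => //; split => //; exact: (no_pat231_lt adj no_pat).
apply/negbTE/eqP => eq_Pi; move: ik_Pv; rewrite -eq_Pi => /(subsetP (weakle_Pidown pu)).
by rewrite inversions_swap_down // setD11.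
Qed.

Lemma Piup_swap_eq v i k : parab J v -> parab J (swap v i k) ->
  (i, k) \in inversions v -> val (v i) = (val (v k)).+1 ->
  (Piup J (swap v i k) == Piup J v) = [exists j, pat231 v i j k].
Proof.
move=> pv pu ik_v adj; case: (boolP [exists j, pat231 v i j k]) => [/existsP[j pat] | no_pat].
  by rewrite -{2}(swapK v i k) (Piup_swap pu (pat132_swap231 pat)) eqxx.
have ik := inversions_lt ik_v.
have ik_Pu : (i, k) \notin inversions (Piup J (swap v i k)).
  apply: up_stable_Piup => //; split=> [|j ij jk dr]; first by rewrite inversions_swap_down // setD11.
  have [ji jk'] : j != i /\ j != k by split; apply/eqP => ej; subst j; rewrite ltnn in ij jk.
  by rewrite swapL swapD //; exact: (no_pat231_lt adj no_pat).
apply/negbTE/eqP => eq_Pi; move: ik_Pu; rewrite eq_Pi.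
by rewrite (subsetP (weakle_Piup pv) _ ik_v).
Qed.

Lemma weakcover_swap u v i k : weakle u v ->
  inversions v :\: inversions u = [set (i, k)] -> val (v i) = (val (v k)).+1 ->
  u = swap v i k.
Proof.
move=> uv dinv adj; have /setDP[ik_v _] : (i, k) \in inversions v :\: inversions u.
  by rewrite dinv set11.
have ik := inversions_lt ik_v.
apply: inversions_inj; rewrite inversions_swap_down // -dinv setDDr setDv set0U.
exact/esym/setIidPr.
Qed.

End Projections.

Theorem lemma3p16 (n : nat) (J : {set 'I_n.-1}) (u v : 'S_n) :
  parab J u -> parab J v -> weakcover u v ->
  [<-> (exists i j k : 'I_n,
          [/\ (val i < val j < val k)%N, diff_regions J i j k,
              (val (v k) < val (v i) < val (v j))%N, val (v i) = (val (v k)).+1 &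
              inversions v :\: inversions u = [set (i, k)]]);
       Pidown J u = Pidown J v;
       Piup J u = Piup J v].
Proof.
move=> pu pv /andP[uv /existsP[i /existsP[k /andP[/eqP dinv /eqP adj]]]].
have /setDP[ik_v _] : (i, k) \in inversions v :\: inversions u by rewrite dinv set11.
have eq_u := weakcover_swap uv dinv adj; subst u.
tfae=> [[i' [j [k' [ijk dr vals _ dinv']]]] | /eqP | /eqP].
- move: dinv'; rewrite dinv => /set1_inj [ei ek]; subst i' k'.
  by apply/eqP; rewrite Pidown_swap_eq //; apply/existsP; exists j; apply/pat231P.
- by rewrite Pidown_swap_eq // -Piup_swap_eq // => /eqP.
- rewrite Piup_swap_eq // => /existsP[j /pat231P[ijk dr vals _]].
  by exists i, j, k.
Qed.
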